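(* Let $\mathcal{R}$ be a set of rules on a finite set $Q$, and let $\mathcal{R}^*$ be the set of critical rules of $\mathcal{A}(\mathcal{R})$. Then $\mathcal{A}(\mathcal{R}^* )=\mathcal{A}(\mathcal{R})$, $|\mathcal{R}^*|\le|\mathcal{R}|$, and $l(\mathcal{R}^* )\le l(\mathcal{R})$.
   Context: A rule on $Q$ is a pair $(A,q)$ with $A\subseteq Q$, $q\in Q$; it accepts $Y\subseteq Q$ if $q\in Y$ implies $Y\cap A\neq\emptyset$. $\mathcal{K}(\mathcal{R})$ is the family of subsets accepted by all rules of $\mathcal{R}$, and $\mathcal{A}(\mathcal{R})$ is the family of $K\in\mathcal{K}(\mathcal{R})$ for which there is a sequence $\emptyset=Y_0\subseteq\dots\subseteq Y_k=K$ of members of $\mathcal{K}(\mathcal{R})$ with $|Y_{i+1}\setminus Y_i|=1$; it is an antimatroid. For an antimatroid $\mathcal{A}$, let $\mathcal{A}^*=\{Q\setminus X: X\in\mathcal{A}\}$ and $\tau(X)=\bigcap\{Y\in\mathcal{A}^*: X\subseteq Y\}$. A rule $(A,q)$ with $q\notin A$ is critical for $\mathcal{A}$ if, with $C=A\cup\{q\}$, $\tau(C)\setminus\{q\}\notin\mathcal{A}^*$ and $\tau(C)\setminus\{q,s\}\in\mathcal{A}^*$ for every $s\in A$. The size of a set of rules is $l(\mathcal{R})=\sum_{(A,q)\in\mathcal{R}}(|A|+1)$. *)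

From mathcomp Require Import all_boot.
Set Implicit Arguments. Unset Strict Implicit. Unset Printing Implicit Defensive.

Section Rules.
Variable Q : finType.

Definition rule := ({set Q} * Q)%type.

Definition accepts (r : rule) (Y : {set Q}) : bool :=
  (r.2 \in Y) ==> (Y :&: r.1 != set0).

Definition Kfam (R : {set rule}) : {set {set Q}} :=
  [set Y : {set Q} | [forall r in R, accepts r Y]].

Definition step (X Y : {set Q}) : bool := (X \subset Y) && (#|Y :\: X| == 1).

(* A(R): members K of K(R) reachable from the empty set by a chain
   set0 = Y_0 ⊆ ... ⊆ Y_k = K of members of K(R) adding one element at a time. *)
Definition Afam (R : {set rule}) : {set {set Q}} :=
  [set K : {set Q} | [exists n : 'I_(#|Q|.+1),
     [exists Ys : n.+1.-tuple {set Q},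
        [&& tnth Ys ord0 == set0, tnth Ys ord_max == K,
            [forall i : 'I_n.+1, tnth Ys i \in Kfam R] &
            [forall i : 'I_n, step (tnth Ys (inord i)) (tnth Ys (inord i.+1))]]]]].

Definition dualfam (F : {set {set Q}}) : {set {set Q}} := [set ~: X | X in F].

Definition tau (F : {set {set Q}}) (X : {set Q}) : {set Q} :=
  \bigcap_(Y in dualfam F | X \subset Y) Y.

Definition critical (F : {set {set Q}}) (r : rule) : bool :=
  let A := r.1 in let q := r.2 in
  let C := q |: A in
  [&& q \notin A,
      tau F C :\ q \notin dualfam F &
      [forall s in A, tau F C :\: [set q; s] \in dualfam F]].

Definition critical_rules (F : {set {set Q}}) : {set rule} :=
  [set r : rule | critical F r].

Definition rsize (R : {set rule}) : nat := \sum_(r in R) (#|r.1| + 1).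

End Rules.

From mathcomp Require Import all_boot.
Set Implicit Arguments. Unset Strict Implicit. Unset Printing Implicit Defensive.

(* A(R) is an antimatroid: it contains set0, is closed under union and has
   the augmentation property.  For any antimatroid F the critical rules accept
   every member of F; and if Y is in F but x |: Y is not, a maximal such Y'
   containing Y together with the s for which s |: x |: Y' is in F form a
   critical rule that rejects x |: Y.  Hence the critical rules of A(R)
   generate A(R).  For a critical rule (A, q) of A(R), the set
   q |: ~: tau(q |: A) is not in A(R) although ~: tau(q |: A) is, so some rule
   (A', q) of R rejects it, and then A \subset A' \subset tau(q |: A).  Since q and
   tau(q |: A) determine a critical rule, (A, q) |-> (A', q) is injective and
   does not shrink premises, which gives both inequalities. *)

Section AccessibleFamily.
Variables (Q : finType) (R : {set rule Q}).

Inductive reachable : {set Q} -> Prop :=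
| reachable0 : reachable set0
| reachableU1 Y x : reachable Y -> x \notin Y -> x |: Y \in Kfam R ->
    reachable (x |: Y).

Lemma Kfam0 : set0 \in Kfam R.
Proof. by rewrite inE; apply/forall_inP => r _; rewrite /accepts in_set0. Qed.

Lemma reachable_Kfam Y : reachable Y -> Y \in Kfam R.
Proof. by case=> [|Y' x _ _ ->]; [exact: Kfam0|]. Qed.

Lemma reachable_chain K : reachable K ->
  exists f : nat -> {set Q}, [/\ f 0 = set0, f #|K| = K,
     (forall i, i <= #|K| -> f i \in Kfam R) &
     (forall i, i < #|K| -> step (f i) (f i.+1))].
Proof.
elim=> [|Y x _ [f [f0 fY fK fS]] xY xK].
  by exists (fun _ => set0); rewrite cards0; split=> // *; exact: Kfam0.
exists (fun i => if i <= #|Y| then f i else x |: Y); rewrite cardsU1 xY; split.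
- by rewrite leq0n.
- by rewrite ltnn.
- by move=> i _; case: ifP => [/fK|].
move=> i; rewrite add1n ltnS; case: (ltngtP i #|Y|) => // [/fS //|-> _].
rewrite fY /step subsetUr setDUl setDv setU0.
suff -> : [set x] :\: Y = [set x] by rewrite cards1.
by apply/setDidPl; rewrite disjoints1.
Qed.

Lemma reachable_Afam K : reachable K -> K \in Afam R.
Proof.
move=> /reachable_chain [f [f0 fK fin fS]].
rewrite inE; apply/existsP.
have cardK : #|K| < #|Q|.+1 by rewrite ltnS max_card.
exists (Ordinal cardK); apply/existsP; exists [tuple f i | i < #|K|.+1].
rewrite !tnth_mktuple /= f0 fK !eqxx /=; apply/andP; split.
  by apply/forallP=> i; rewrite tnth_mktuple; apply: fin; rewrite -ltnS.
apply/forallP=> i; have iK := ltn_ord i.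
by rewrite !tnth_mktuple !inordK //; [exact: fS | exact: ltnW].
Qed.

Lemma Afam_reachable K : K \in Afam R -> reachable K.
Proof.
rewrite inE => /existsP [n /existsP [Ys]].
case/and4P=> /eqP Y0 /eqP YK /forallP Kin /forallP St.
have inord_val (i : 'I_n.+1) : inord i = i by apply: val_inj; rewrite /= inordK.
suff reach_i i : i <= n -> reachable (tnth Ys (inord i)).
  by rewrite -YK -(inord_val ord_max); apply: reach_i.
elim: i => [_|i IH lt_i_n].
  by rewrite -[0]/(nat_of_ord (@ord0 n)) inord_val Y0; exact: reachable0.
have := St (Ordinal lt_i_n); rewrite /step /= => /andP [sub /cards1P [x Ex]].
have Yi1 : tnth Ys (inord i.+1) = x |: tnth Ys (inord i).
  by rewrite -(setID (tnth Ys (inord i.+1)) (tnth Ys (inord i))) Ex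
             (setIidPr sub) setUC.
have : x \in tnth Ys (inord i.+1) :\: tnth Ys (inord i) by rewrite Ex set11.
rewrite inE => /andP [xYi _].
have xYi1 := Kin (inord i.+1); rewrite Yi1 in xYi1 *.
by apply: reachableU1 => //; apply: IH; exact: ltnW.
Qed.

Lemma Afam0 : set0 \in Afam R.
Proof. exact/reachable_Afam/reachable0. Qed.

Lemma Afam_Kfam Y : Y \in Afam R -> Y \in Kfam R.
Proof. by move/Afam_reachable/reachable_Kfam. Qed.

Lemma AfamU1 Y x : Y \in Afam R -> x |: Y \in Kfam R -> x |: Y \in Afam R.
Proof.
move=> YA xYK; have [xY|xY] := boolP (x \in Y).
  by rewrite (setUidPr _ : _ = Y) ?sub1set.
exact/reachable_Afam/reachableU1/xYK/xY/Afam_reachable.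
Qed.

Lemma accepts_setU (r : rule Q) Y Z : accepts r Y -> accepts r Z -> accepts r (Y :|: Z).
Proof.
have meetsU (V W : {set Q}) : V :&: r.1 != set0 -> (V :|: W) :&: r.1 != set0.
  by apply: contraNneq => VW0; rewrite -subset0 -VW0 setSI ?subsetUl.
rewrite /accepts inE => /implyP aY /implyP aZ; apply/implyP => /orP [/aY|/aZ].
  exact: meetsU.
by rewrite setUC; apply: meetsU.
Qed.

Lemma Kfam_setU Y Z : Y \in Kfam R -> Z \in Kfam R -> Y :|: Z \in Kfam R.
Proof.
rewrite !inE => /forall_inP KY /forall_inP KZ; apply/forall_inP => r rR.
by apply: accepts_setU; [apply: KY | apply: KZ].
Qed.

Lemma Afam_setU Y Z : Y \in Afam R -> Z \in Afam R -> Y :|: Z \in Afam R.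
Proof.
move=> YA /Afam_reachable; elim=> [|Z' x _ YZ'A _ xZ'K]; first by rewrite setU0.
rewrite setUCA; apply: AfamU1 => //.
by rewrite setUCA; apply: Kfam_setU => //; apply: Afam_Kfam.
Qed.

Lemma Afam_augment Y Z : Y \in Afam R -> Z \in Afam R -> ~~ (Z \subset Y) ->
  exists2 x, x \in Z :\: Y & x |: Y \in Afam R.
Proof.
move=> YA /Afam_reachable; elim=> [|Z' z Z'A IH zZ' zZ'K]; first by rewrite sub0set.
have [Z'Y|/IH [x xZ'Y xYA] _] := boolP (Z' \subset Y); last first.
  by exists x; rewrite // !inE; case/setDP: xZ'Y => -> ->; rewrite orbT.
rewrite subUset sub1set Z'Y andbT => zY; exists z; first by rewrite !inE eqxx zY.
rewrite -(setUidPl Z'Y) setUCA.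
exact/Afam_setU/reachable_Afam/reachableU1.
Qed.

End AccessibleFamily.

Lemma setD1_setC (Q : finType) (T : {set Q}) x : T :\ x = ~: (x |: ~: T).
Proof. by rewrite setCU setCK setDE setIC. Qed.

Lemma setD2_setC (Q : finType) (T : {set Q}) x s :
  T :\: [set x; s] = ~: (s |: (x |: ~: T)).
Proof.
by apply/setP=> z; rewrite !inE; case: (z == x); case: (z == s); case: (z \in T).
Qed.

Section Antimatroid.
Variables (Q : finType) (F : {set {set Q}}).
Hypothesis F0 : set0 \in F.
Hypothesis F_setU : forall Y Z, Y \in F -> Z \in F -> Y :|: Z \in F.
Hypothesis F_augment : forall Y Z, Y \in F -> Z \in F -> ~~ (Z \subset Y) ->
  exists2 x, x \in Z :\: Y & x |: Y \in F.

Lemma dualfamE (W : {set Q}) : (~: W \in dualfam F) = (W \in F).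
Proof. by apply/imsetP/idP => [[X XF /setC_inj ->] //| WF]; exists W. Qed.

Lemma tau_ext (C : {set Q}) : C \subset tau F C.
Proof. by apply/bigcapsP => Z /andP [_ ->]. Qed.

Lemma tau_min (C Z : {set Q}) : Z \in dualfam F -> C \subset Z -> tau F C \subset Z.
Proof. by move=> ZF CZ; apply: bigcap_inf; rewrite ZF CZ. Qed.

Lemma tau_dual (C : {set Q}) : tau F C \in dualfam F.
Proof.
apply: (big_ind (fun Z => Z \in dualfam F)) => [||Z /andP [] //].
  by rewrite -setC0 dualfamE.
by move=> Y Z; rewrite -[Y]setCK -[Z]setCK !dualfamE -setCU dualfamE; apply: F_setU.
Qed.

Lemma tau_squeeze (C D : {set Q}) : C \subset D -> D \subset tau F C -> tau F D = tau F C.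
Proof.
move=> CD DtC; apply/eqP; rewrite eqEsubset tau_min ?tau_dual //=.
exact: tau_min (tau_dual D) (subset_trans CD (tau_ext D)).
Qed.

Lemma critical_accepts r X : critical F r -> X \in F -> accepts r X.
Proof.
case: r => A q /and3P [/= qA nT _] XF; set T := tau F (q |: A) in nT *.
have TF : ~: T \in F by rewrite -dualfamE setCK tau_dual.
have qAT : q |: A \subset T := tau_ext _.
have qT : q \in T by rewrite (subsetP qAT) ?setU11.
rewrite /accepts /=; apply/implyP => qX; apply/negP => /eqP XA0.
have nXT : ~~ (X :|: ~: T \subset ~: T).
  by apply/subsetP => /(_ q); rewrite !inE qX qT => /(_ isT).
have [x /setDP [xXT]] := F_augment TF (F_setU XF TF) nXT.
rewrite inE negbK => xT xTF.
have xX : x \in X by move: xXT; rewrite !inE xT orbF.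
have TxD : T :\ x \in dualfam F by rewrite setD1_setC dualfamE.
have [xq|nxq] := eqVneq x q; first by move: nT; rewrite -xq TxD.
have xA : x \notin A.
  by apply/negP => xA; have := in_set0 x; rewrite -XA0 inE xX xA.
have : q |: A \subset T :\ x.
  apply/subsetP => z zqA; rewrite !inE (subsetP qAT _ zqA) andbT.
  by case/setU1P: zqA => [->|zA]; [rewrite eq_sym | apply: contraNneq xA => <-].
by move/(tau_min TxD)/subsetP/(_ x xT); rewrite !inE eqxx.
Qed.

Definition blocker (Y : {set Q}) x : {set Q} :=
  [set s | (s \notin x |: Y) && (s |: (x |: Y) \in F)].

(* Maximality of Y makes ~: Y the tau-closure of x |: blocker Y x. *)
Lemma blocker_critical Y x :
  Y \in F -> x \notin Y -> x |: Y \notin F ->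
  (forall w, w \notin Y -> w != x -> w |: Y \in F -> x |: (w |: Y) \in F) ->
  critical F (blocker Y x, x).
Proof.
move=> YF xY xYF maxY; set A := blocker Y x.
have xA : x \notin A by rewrite inE setU11.
have tauE : tau F (x |: A) = ~: Y.
  apply/eqP; rewrite eqEsubset tau_min ?dualfamE //=.
    apply/bigcapsP => Z /andP [ZF xAZ]; rewrite -[Z]setCK setCS.
    rewrite -[Z]setCK dualfamE in ZF; apply/negPn/negP => ZY.
    have [w /setDP [wZ wY] wYF] := F_augment YF ZF ZY.
    have wxA : w \notin x |: A.
      by apply: contraTN wZ => /(subsetP xAZ); rewrite inE negbK.
    move: wxA; rewrite !inE negb_or => /andP [wx].
    by rewrite (negbTE wx) (negbTE wY) setUCA maxY.
  apply/subsetP => z /setU1P [->|]; rewrite inE //.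
  by rewrite !inE negb_or => /andP [/andP [_ ->]].
rewrite /critical /= tauE xA /= setD1_setC setCK dualfamE xYF /=.
by apply/forall_inP => s; rewrite setD2_setC setCK dualfamE inE => /andP [].
Qed.

Lemma critical_reject Y x : Y \in F -> x |: Y \notin F ->
  exists2 r, critical F r & ~~ accepts r (x |: Y).
Proof.
move=> YF xYF; have xY : x \notin Y.
  by apply: contra xYF => xY; rewrite (setUidPr _ : _ = Y) ?sub1set.
pose P W := [&& W \in F, Y \subset W, x \notin W & x |: W \notin F].
have [|Y' /and4P [Y'F YY' xY' xY'F] maxY'] := @arg_maxnP _ Y P (fun W => #|W|).
  by rewrite /P YF subxx xY.
exists (blocker Y' x, x).
  apply: blocker_critical => // w wY' wx wY'F; apply: contraT => xwY'F.
  have /maxY' /= : P (w |: Y').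
    by rewrite /P wY'F (subset_trans YY' (subsetUr _ _)) !inE negb_or eq_sym wx xY' xwY'F.
  by rewrite cardsU1 wY' ltnn.
rewrite /accepts /= setU11 /= negbK; apply/eqP/setP => z; rewrite !inE.
by case: (z == x); case: (z \in Y) (subsetP YY' z); rewrite ?andbF // => ->.
Qed.

Lemma critical_tau_subset A1 A2 q :
  critical F (A1, q) -> critical F (A2, q) ->
  tau F (q |: A1) = tau F (q |: A2) -> A1 \subset A2.
Proof.
move=> /and3P [/= qA1 _ /forall_inP A1F] /and3P [/= _ nT _] tauE.
set T := tau F (q |: A2) in tauE nT; apply/subsetP => s sA1; apply: contraT => sA2.
have TF : ~: T \in F by rewrite -dualfamE setCK tau_dual.
have qA2T : q |: A2 \subset T := tau_ext _.
have qT : q \in T by rewrite (subsetP qA2T) ?setU11.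
have sT : s \in T by rewrite -tauE (subsetP (tau_ext _)) // !inE sA1 orbT.
have sqF : s |: (q |: ~: T) \in F by rewrite -dualfamE -setD2_setC -tauE A1F.
have nsub : ~~ (s |: (q |: ~: T) \subset ~: T).
  by apply/subsetP => /(_ q); rewrite !inE eqxx orbT qT => /(_ isT).
have [y /setDP [ysq]] := F_augment TF sqF nsub; rewrite inE negbK => yT yTF.
move: ysq; rewrite !inE yT orbF => /orP [/eqP ys|/eqP yq].
- have TsD : T :\ s \in dualfam F by rewrite setD1_setC dualfamE -ys.
  have : q |: A2 \subset T :\ s.
    apply/subsetP => z zqA2; rewrite !inE (subsetP qA2T _ zqA2) andbT.
    case/setU1P: zqA2 => [->|zA2].
      by apply: contraNneq qA1 => ->.
    by apply: contraNneq sA2 => <-.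
  by move/(tau_min TsD)/subsetP/(_ s sT); rewrite !inE eqxx.
- by move: nT; rewrite setD1_setC dualfamE -yq yTF.
Qed.

Lemma critical_tau_inj A1 A2 q :
  critical F (A1, q) -> critical F (A2, q) ->
  tau F (q |: A1) = tau F (q |: A2) -> A1 = A2.
Proof.
move=> c1 c2 tauE; apply/eqP; rewrite eqEsubset.
by rewrite (critical_tau_subset c1 c2) // (critical_tau_subset c2 c1).
Qed.

End Antimatroid.

Section CriticalRules.
Variables (Q : finType) (R : {set rule Q}).

Let AR0 := Afam0 R.
Let AR_setU := @Afam_setU _ R.
Let AR_augment := @Afam_augment _ R.

Lemma Afam_critical_rules : Afam (critical_rules (Afam R)) = Afam R.
Proof.
apply/setP => K; apply/idP/idP => /Afam_reachable.
  elim=> [|Y x _ YA _ xYK]; first exact: Afam0.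
  apply: contraT => /(critical_reject AR_augment YA) [r cr].
  by move: xYK; rewrite inE => /forall_inP /(_ r); rewrite inE cr => /(_ isT) ->.
elim=> [|Y x reachY YA xY xYK]; first exact: Afam0.
apply: AfamU1 => //; rewrite inE; apply/forall_inP => r; rewrite inE => cr.
by apply: (critical_accepts AR0 AR_setU AR_augment cr); apply/reachable_Afam/reachableU1.
Qed.

Lemma critical_witness A q : critical (Afam R) (A, q) ->
  exists2 r, r \in R &
    [&& r.2 == q, A \subset r.1 & r.1 \subset tau (Afam R) (q |: A)].
Proof.
move=> /and3P [/= qA nT /forall_inP AF]; set T := tau (Afam R) (q |: A) in nT AF *.
have TA : ~: T \in Afam R by rewrite -dualfamE setCK (tau_dual AR0 AR_setU).
have : q |: ~: T \notin Kfam R.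
  by apply: contra nT => /(AfamU1 TA); rewrite setD1_setC dualfamE.
rewrite inE => /forall_inPn [[A' q'] rR]; rewrite /accepts /= negb_imply negbK.
case/andP=> q'qT /eqP qTA'0; exists (A', q') => //=.
have notin_A' z : z \in q |: ~: T -> z \notin A'.
  by move=> zqT; apply/negP => zA'; have := in_set0 z; rewrite -qTA'0 inE zqT zA'.
have q'q : q' = q.
  case/setU1P: q'qT => // q'T; move/Afam_Kfam: TA; rewrite inE.
  move=> /forall_inP /(_ _ rR); rewrite /accepts /= q'T /=.
  case/set0Pn => z /setIP [zT zA'].
  by move: (notin_A' z); rewrite inE zT orbT zA' => /(_ isT).
rewrite q'q eqxx /=; apply/andP; split.
  apply/subsetP => s sA; have := AF s sA; rewrite setD2_setC dualfamE => /Afam_Kfam.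
  rewrite inE => /forall_inP /(_ _ rR); rewrite /accepts /= q'q !inE eqxx orbT /=.
  case/set0Pn => z /setIP [zsqT zA']; case/setU1P: zsqT => [<- //|zqT].
  by move: (notin_A' z zqT); rewrite zA'.
apply/subsetP => z zA'; apply: contraT => zT.
by move: (notin_A' z); rewrite !inE zT orbT zA' => /(_ isT).
Qed.

Lemma critical_rules_dominated : exists2 phi : rule Q -> rule Q,
  {in critical_rules (Afam R) &, injective phi} &
  {in critical_rules (Afam R), forall r, phi r \in R /\ r.1 \subset (phi r).1}.
Proof.
pose dominates (r r' : rule Q) :=
  [&& r'.2 == r.2, r.1 \subset r'.1 & r'.1 \subset tau (Afam R) (r.2 |: r.1)].
pose phi r := odflt r [pick r' in R | dominates r r'].
have phiP r : r \in critical_rules (Afam R) -> phi r \in R /\ dominates r (phi r).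
  case: r => A q; rewrite inE => /critical_witness [r' r'R dom_r'].
  rewrite /phi; case: pickP => [r'' /andP [] // | /(_ r')].
  by rewrite /dominates r'R /= dom_r'.
have tau_phi r : r \in critical_rules (Afam R) ->
    tau (Afam R) (r.2 |: (phi r).1) = tau (Afam R) (r.2 |: r.1).
  move=> /phiP [_ /and3P [_ sub1 sub2]].
  apply: (tau_squeeze AR0 AR_setU); first exact: setUS.
  by rewrite subUset sub2 sub1set (subsetP (tau_ext _ _)) ?setU11.
exists phi => [[A1 q1] [A2 q2] r1 r2 phiE | r /phiP [? /and3P []] //].
have q12 : q1 = q2.
  have [[_ /and3P [/eqP e1 _ _]] [_ /and3P [/eqP e2 _ _]]] := (phiP _ r1, phiP _ r2).
  by rewrite /= in e1 e2; rewrite -e1 -e2 phiE.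
subst q2; congr (_, _); move: r1 r2 (tau_phi _ r1) (tau_phi _ r2).
rewrite !inE phiE /= => c1 c2 tau1 tau2.
by apply: (critical_tau_inj AR0 AR_setU AR_augment c1 c2); rewrite -tau1 tau2.
Qed.

End CriticalRules.

Lemma dominated_rules_le (Q : finType) (S R : {set rule Q}) (phi : rule Q -> rule Q) :
  {in S &, injective phi} -> {in S, forall r, phi r \in R /\ r.1 \subset (phi r).1} ->
  #|S| <= #|R| /\ rsize S <= rsize R.
Proof.
move=> phi_inj phiP; have imS : phi @: S \subset R.
  by apply/subsetP => _ /imsetP [r rS ->]; case: (phiP r rS).
split; first by rewrite -(card_in_imset phi_inj) subset_leq_card.
apply: (@leq_trans (\sum_(r in S) (#|(phi r).1| + 1))).
  by apply: leq_sum => r rS; rewrite leq_add2r subset_leq_card //; case: (phiP r rS).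
rewrite -(big_imset (fun r : rule Q => #|r.1| + 1) phi_inj) /= /rsize.
by rewrite [in X in _ <= X](big_setID (phi @: S)) /= (setIidPr imS) leq_addr.
Qed.

Theorem corollary3p7 (Q : finType) (R : {set rule Q}) :
  let Rstar := critical_rules (Afam R) in
  [/\ Afam Rstar = Afam R, #|Rstar| <= #|R| & rsize Rstar <= rsize R].
Proof.
have [phi phi_inj phiP] := critical_rules_dominated R.
have [card_le rsize_le] := dominated_rules_le phi_inj phiP.
by split; first exact: Afam_critical_rules.
Qed.
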